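(* Let $\mathfrak{C}=(U,M,I,N,J)$ be a formal decision context. Then the set of necessary II-decision rules of $\mathfrak{C}$ is $$\overline{\mathfrak{R}}_{II}(\mathfrak{C})=\{(\cup[O]_{S_1},(\cup[O]_{S_1})^{\square_M})\rightarrow(O^{\lozenge_N\square_N},O^{\lozenge_N})\mid O\in\mathrm{Ext}L_O(\mathfrak{C}_M)\}.$$
   Context: Formal context $(U,M,I)$: $U$ and $M$ are finite nonempty sets and $I\subseteq U\times M$. For $O\subseteq U$ and $C\subseteq M$ define: - $O^{\lozenge}=\{a\in M\mid\exists x\in O\,((x,a)\in I)\}$ and $C^{\square}=\{x\in U\mid \forall a\in M\,((x,a)\in I\Rightarrow a\in C)\}$; - $O^{\square}=\{a\in M\mid \forall x\in U\,((x,a)\in I\Rightarrow x\in O)\}$ and $C^{\lozenge}=\{x\in U\mid \exists a\in C\,((x,a)\in I)\}$. An object-oriented concept is a pair $(O,C)$ with $O^\square=C$ (the $\square$ on subsets of $U$) and $C^\lozenge=O$ (the $\lozenge$ on subsets of $M$); the set of these is $L_O$. A property-oriented concept is a pair $(O,C)$ with $O^\lozenge=C$ (the $\lozenge$ on subsets of $U$) and $C^\square=O$ (the $\square$ on subsets of $M$); the set of these is $L_P$. $\mathrm{Ext}$ denotes the set of extents. Standing assumption: contexts are canonical, i.e. for all $x\in U$ and $a\in M$ we have $\{x\}^\uparrow\notin\{\emptyset,M\}$ and $\{a\}^\downarrow\notin\{\emptyset,U\}$, where $\{x\}^\uparrow$ is the set of attributes of $x$ and $\{a\}^\downarrow$ is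 the set of objects having $a$. A formal decision context $\mathfrak{C}=(U,M,I,N,J)$ has conditional context $\mathfrak{C}_M=(U,M,I)$ and decision context $\mathfrak{C}_N=(U,N,J)$, with $M\cap N=\emptyset$. Subscripts $M$ and $N$ indicate the context in which an operator is computed. A II-decision rule is $(O,C)\rightarrow(Y,D)$ with $(O,C)\in L_O(\mathfrak{C}_M)$, $(Y,D)\in L_P(\mathfrak{C}_N)$ and $O\subseteq Y$; the set of these is $\mathfrak{R}_{II}(\mathfrak{C})$. Implication: $(O_1,C_1)\rightarrow(Y_1,D_1)\Rightarrow(O_2,C_2)\rightarrow(Y_2,D_2)$ iff $O_2\subseteq O_1\subseteq Y_1\subseteq Y_2$. A rule $r$ is necessary if there is no $r_1\in\mathfrak{R}_{II}(\mathfrak{C})\setminus\{r\}$ with $r_1\Rightarrow r$. $S_1$ is the equivalence relation on $\mathrm{Ext}L_O(\mathfrak{C}_M)$ given by $(O,Y)\in S_1$ iff $O^{\lozenge_N}=Y^{\lozenge_N}$. $[O]_{S_1}$ is the class of $O$, and $\cup[O]_{S_1}$ is the union of its members. *)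

From mathcomp Require Import all_boot.
Set Implicit Arguments. Unset Strict Implicit. Unset Printing Implicit Defensive.

Section Ops.
Variables (U A : finType) (R : U -> A -> bool).

Definition diaU (O : {set U}) : {set A} := [set a | [exists x in O, R x a]].
Definition boxA (C : {set A}) : {set U} := [set x | [forall a, R x a ==> (a \in C)]].
Definition boxU (O : {set U}) : {set A} := [set a | [forall x, R x a ==> (x \in O)]].
Definition diaA (C : {set A}) : {set U} := [set x | [exists a in C, R x a]].

Definition is_LO (p : {set U} * {set A}) : bool := (boxU p.1 == p.2) && (diaA p.2 == p.1).
Definition is_LP (p : {set U} * {set A}) : bool := (diaU p.1 == p.2) && (boxA p.2 == p.1).
Definition ExtLO (O : {set U}) : bool := [exists C : {set A}, is_LO (O, C)].

Definition canonical : Prop :=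
  (forall x : U, [set a | R x a] != set0 /\ [set a | R x a] != setT) /\
  (forall a : A, [set x | R x a] != set0 /\ [set x | R x a] != setT).
End Ops.

Section Decision.
Variables (U M N : finType) (I : U -> M -> bool) (J : U -> N -> bool).

(* a rule (O,C) -> (Y,D) *)
Definition rule := (({set U} * {set M}) * ({set U} * {set N}))%type.

Definition is_ruleII (r : rule) : Prop :=
  is_LO I r.1 /\ is_LP J r.2 /\ r.1.1 \subset r.2.1.

Definition rule_implies (r1 r2 : rule) : Prop :=
  r2.1.1 \subset r1.1.1 /\ r1.1.1 \subset r1.2.1 /\ r1.2.1 \subset r2.2.1.

Definition necessaryII (r : rule) : Prop :=
  is_ruleII r /\ ~ (exists r1, is_ruleII r1 /\ r1 <> r /\ rule_implies r1 r).

Definition S1_union (O : {set U}) : {set U} :=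
  \bigcup_(Y : {set U} | ExtLO I Y && (diaU J O == diaU J Y)) Y.
End Decision.

From mathcomp Require Import all_boot.
Set Implicit Arguments. Unset Strict Implicit.

(* Both pairs (diaA, boxU) and (diaU, boxA) are Galois connections, so the
   extents of object-oriented concepts are the fixed points of the interior
   operator diaA \o boxU and are closed under unions.  Hence the S1-class of
   an extent O has a largest member S1_union O, and O ⊆ S1_union O ⊆ O^◇□.
   Every II-rule with antecedent extent O is implied by the rule
   (S1_union O, ...) -> (O^◇□, O^◇).  Conversely, the antecedent extent of an
   II-rule implying this one lies between S1_union O and O^◇□, hence in the
   S1-class of O, hence equals S1_union O; its consequent extent Y contains O
   and satisfies Y = Y^◇□, so it equals O^◇□. *)

Section GaloisConnections.
Variables (U A : finType) (R : U -> A -> bool).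

Lemma diaA_boxU_adj (C : {set A}) (O : {set U}) :
  (diaA R C \subset O) = (C \subset boxU R O).
Proof.
apply/subsetP/subsetP => sub.
- move=> a aC; rewrite inE; apply/forallP => x; apply/implyP => Rxa.
  by apply: sub; rewrite inE; apply/existsP; exists a; rewrite aC Rxa.
- move=> x; rewrite inE => /existsP [a /andP [aC Rxa]].
  by have := sub a aC; rewrite inE => /forallP /(_ x) /implyP; apply.
Qed.

Lemma diaU_boxA_adj (O : {set U}) (D : {set A}) :
  (diaU R O \subset D) = (O \subset boxA R D).
Proof.
apply/subsetP/subsetP => sub.
- move=> x xO; rewrite inE; apply/forallP => a; apply/implyP => Rxa.
  by apply: sub; rewrite inE; apply/existsP; exists x; rewrite xO Rxa.
- move=> a; rewrite inE => /existsP [x /andP [xO Rxa]].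
  by have := sub x xO; rewrite inE => /forallP /(_ a) /implyP; apply.
Qed.

Lemma diaA_mono (C1 C2 : {set A}) : C1 \subset C2 -> diaA R C1 \subset diaA R C2.
Proof. by move=> sC; rewrite diaA_boxU_adj (subset_trans sC) // -diaA_boxU_adj. Qed.

Lemma boxU_mono (O1 O2 : {set U}) : O1 \subset O2 -> boxU R O1 \subset boxU R O2.
Proof. by move=> sO; rewrite -diaA_boxU_adj (subset_trans _ sO) // diaA_boxU_adj. Qed.

Lemma diaU_mono (O1 O2 : {set U}) : O1 \subset O2 -> diaU R O1 \subset diaU R O2.
Proof. by move=> sO; rewrite diaU_boxA_adj (subset_trans sO) // -diaU_boxA_adj. Qed.

Lemma boxA_mono (D1 D2 : {set A}) : D1 \subset D2 -> boxA R D1 \subset boxA R D2.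
Proof. by move=> sD; rewrite -diaU_boxA_adj (subset_trans _ sD) // diaU_boxA_adj. Qed.

Lemma diaU_boxA_diaU (O : {set U}) : diaU R (boxA R (diaU R O)) = diaU R O.
Proof.
apply/eqP; rewrite eqEsubset diaU_boxA_adj subxx /=.
by apply: diaU_mono; rewrite -diaU_boxA_adj.
Qed.

Lemma ExtLOE (O : {set U}) : ExtLO R O = (diaA R (boxU R O) == O).
Proof.
apply/existsP/idP => [[C /andP [/eqP <- /eqP ->]] // | fixO].
by exists (boxU R O); rewrite /is_LO /= eqxx fixO.
Qed.

Lemma is_LOE (O : {set U}) (C : {set A}) :
  is_LO R (O, C) = ExtLO R O && (C == boxU R O).
Proof.
rewrite ExtLOE /is_LO /= eq_sym.
by apply/andP/andP => [[/eqP <- ->] | [fixO /eqP ->]].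
Qed.

Lemma is_LP_boxA_diaU (O : {set U}) : is_LP R (boxA R (diaU R O), diaU R O).
Proof. by rewrite /is_LP /= diaU_boxA_diaU !eqxx. Qed.

Lemma bigcup_ExtLO (T : finType) (P : pred T) (F : T -> {set U}) :
  (forall i, P i -> ExtLO R (F i)) -> ExtLO R (\bigcup_(i | P i) F i).
Proof.
move=> extF; rewrite ExtLOE eqEsubset diaA_boxU_adj subxx /=.
apply/bigcupsP => i Pi; move: (extF i Pi); rewrite ExtLOE => /eqP {1}<-.
exact/diaA_mono/boxU_mono/bigcup_sup.
Qed.

End GaloisConnections.

Section NecessaryRules.
Variables (U M N : finType) (I : U -> M -> bool) (J : U -> N -> bool).

Definition ruleII_of (O : {set U}) : rule U M N :=
  ((S1_union I J O, boxU I (S1_union I J O)), (boxA J (diaU J O), diaU J O)).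

Lemma S1_union_ExtLO (O : {set U}) : ExtLO I (S1_union I J O).
Proof. by apply: bigcup_ExtLO => Y /andP []. Qed.

Lemma sub_S1_union (O Y : {set U}) :
  ExtLO I Y -> diaU J Y = diaU J O -> Y \subset S1_union I J O.
Proof. by move=> extY eYO; apply: bigcup_sup; rewrite extY eYO eqxx. Qed.

Lemma S1_union_sub_boxA (O : {set U}) : S1_union I J O \subset boxA J (diaU J O).
Proof.
apply/bigcupsP => Y /andP [_ /eqP ->].
by rewrite -diaU_boxA_adj.
Qed.

Lemma is_ruleII_of (O : {set U}) : is_ruleII I J (ruleII_of O).
Proof.
split; first by rewrite is_LOE S1_union_ExtLO eqxx.
by split; [apply: is_LP_boxA_diaU | apply: S1_union_sub_boxA].
Qed.

Lemma ruleII_of_implies (O Y : {set U}) (C : {set M}) (D : {set N}) :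
  is_ruleII I J ((O, C), (Y, D)) -> rule_implies (ruleII_of O) ((O, C), (Y, D)).
Proof.
rewrite /is_ruleII /is_LP is_LOE /= => [[/andP [extO _] [/andP [/eqP eD /eqP eY] sOY]]].
split; first exact: sub_S1_union.
split; first exact: S1_union_sub_boxA.
by rewrite /= -eY -eD; apply/boxA_mono/diaU_mono.
Qed.

Lemma ruleII_implies_of (O : {set U}) (r : rule U M N) :
  ExtLO I O -> is_ruleII I J r -> rule_implies r (ruleII_of O) -> r = ruleII_of O.
Proof.
case: r => [[O1 C1] [Y1 D1]] extO.
rewrite /is_ruleII /rule_implies /is_LP is_LOE /=.
move=> [/andP [extO1 /eqP ->] [/andP [/eqP eD1 /eqP eY1] _]] [sSO1 [sO1Y1 sY1]].
have sOO1 : O \subset O1 := subset_trans (sub_S1_union extO erefl) sSO1.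
have eY : Y1 = boxA J (diaU J O).
  apply/eqP; rewrite eqEsubset sY1 /= -eY1 -eD1.
  exact/boxA_mono/diaU_mono/(subset_trans sOO1).
have eO1 : O1 = S1_union I J O.
  apply/eqP; rewrite eqEsubset sSO1 andbT; apply: sub_S1_union => //.
  apply/eqP; rewrite eqEsubset diaU_boxA_adj -eY sO1Y1.
  exact: diaU_mono.
by rewrite /ruleII_of -eD1 eY diaU_boxA_diaU eO1.
Qed.

End NecessaryRules.

Theorem theorem4p3 (U M N : finType) (I : U -> M -> bool) (J : U -> N -> bool) :
  0 < #|U| -> 0 < #|M| -> 0 < #|N| ->
  canonical I -> canonical J ->
  forall r : rule U M N,
    necessaryII I J r <->
    exists O : {set U}, ExtLO I O /\
      r = ((S1_union I J O, boxU I (S1_union I J O)),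
           (boxA J (diaU J O), diaU J O)).
Proof.
move=> _ _ _ _ _ r; split.
- case: r => [[O C] [Y D]] [ruleII not_implied].
  have extO : ExtLO I O by case: ruleII => /=; rewrite is_LOE => /andP [].
  exists O; split => //.
  case: (eqVneq (ruleII_of I J O) ((O, C), (Y, D))) => [<- // | ne].
  case: not_implied; exists (ruleII_of I J O).
  by split; [apply: is_ruleII_of | split; [apply/eqP | apply: ruleII_of_implies]].
- move=> [O [extO ->]]; split; first exact: is_ruleII_of.
  move=> [r1 [ruleII1 [ne implies1]]].
  exact/ne/(ruleII_implies_of extO ruleII1 implies1).
Qed.
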